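(* Let $K$ be a finite simplicial complex, $(f,g)\colon|K|\to\mathbb{R}^n\times\mathbb{R}^k$ continuous, and $\alpha>0$. Let $U:=\{x\in|K| : g_i(x)\le-\alpha\text{ for all }i=1,\dots,k\}$. Then every $\alpha$-perturbation of the system $f=0\wedge g\le0$ is satisfiable if and only if every $\alpha$-perturbation $h\colon U\to\mathbb{R}^n$ of $f|_U$ has a root in $U$.
   Context: All norms are max-norms: for a function $h$ on a set $D$ with values in some $\mathbb{R}^p$, $\|h\|:=\sup_{x\in D}\max_i|h_i(x)|$. An $\alpha$-perturbation of $f|_U$ is a continuous $h\colon U\to\mathbb{R}^n$ with $\|h-f|_U\|\le\alpha$. An $\alpha$-perturbation of the system $f=0\wedge g\le0$ is a system $\tilde f=0\wedge\tilde g\le0$ with continuous $\tilde f\colon|K|\to\mathbb{R}^n$, $\tilde g\colon|K|\to\mathbb{R}^k$, $\|\tilde f-f\|\le\alpha$, $\|\tilde g-g\|\le\alpha$; it is satisfiable if there is $x\in|K|$ with $\tilde f(x)=0$ and $\tilde g_i(x)\le0$ for all $i$. *)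

From HB Require Import structures.
From mathcomp Require Import all_boot all_order all_algebra.
From mathcomp Require Import all_classical all_reals all_analysis.
Set Implicit Arguments. Unset Strict Implicit. Unset Printing Implicit Defensive.
Import Order.TTheory GRing.Theory Num.Theory.
Import numFieldNormedType.Exports.
Local Open Scope classical_set_scope.
Local Open Scope ring_scope.

Definition is_simplicial_complex (N : nat) (K : {set {set 'I_N}}) : Prop :=
  (forall s : {set 'I_N}, s \in K -> s != finset.set0) /\
  (forall s t : {set 'I_N}, s \in K -> t \subset s -> t != finset.set0 -> t \in K).

(* Geometric realization |K| in R^N (vertex i = i-th standard basis vector):
   points with barycentric coordinates supported on a simplex of K. *)
Definition realization (R : realType) (N : nat) (K : {set {set 'I_N}})
  : set 'rV[R]_N :=
  [set x | (forall i, 0 <= x ord0 i) /\ \sum_(i < N) x ord0 i = 1 /\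
           exists2 s, s \in K & forall i, x ord0 i != 0 -> i \in s].

Definition max_dist_le (R : realType) (N m : nat) (D : set 'rV[R]_N)
  (h f : 'rV[R]_N -> 'rV[R]_m) (a : R) : Prop :=
  forall x, D x -> forall i, `|h x ord0 i - f x ord0 i| <= a.

Definition system_perturbation (R : realType) (N n k : nat)
  (K : {set {set 'I_N}}) (alpha : R)
  (f ft : 'rV[R]_N -> 'rV[R]_n) (g gt : 'rV[R]_N -> 'rV[R]_k) : Prop :=
  {within realization K, continuous ft} /\
  {within realization K, continuous gt} /\
  max_dist_le (realization K) ft f alpha /\
  max_dist_le (realization K) gt g alpha.

Definition satisfiable (R : realType) (N n k : nat) (K : {set {set 'I_N}})
  (ft : 'rV[R]_N -> 'rV[R]_n) (gt : 'rV[R]_N -> 'rV[R]_k) : Prop :=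
  exists2 x, realization K x & ft x = 0 /\ forall i, gt x ord0 i <= 0.

Definition Uset (R : realType) (N k : nat) (K : {set {set 'I_N}})
  (g : 'rV[R]_N -> 'rV[R]_k) (alpha : R) : set 'rV[R]_N :=
  [set x | realization K x /\ forall i, g x ord0 i <= - alpha].

Definition fun_perturbation (R : realType) (N n : nat) (U : set 'rV[R]_N)
  (alpha : R) (f h : 'rV[R]_N -> 'rV[R]_n) : Prop :=
  {within U, continuous h} /\ max_dist_le U h f alpha.

(* Given a root-free alpha-perturbation h of f on U, Tietze's theorem extends
   h - f from the closed set U to a continuous e on R^N bounded by alpha.  Then
   (f + e, g + alpha) is an alpha-perturbation of the system, and its solutions
   are roots of h: g + alpha <= 0 forces the point into U, where f + e = h.
   Conversely a system perturbation restricts to a perturbation of f on U, whose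
   root also satisfies g~ <= g + alpha <= 0. *)

From HB Require Import structures.
From mathcomp Require Import all_boot all_order all_algebra.
From mathcomp Require Import all_classical all_reals all_analysis.
From mathcomp Require Import lra.
Import Order.TTheory GRing.Theory Num.Theory.
Import numFieldNormedType.Exports.
Local Open Scope classical_set_scope.
Local Open Scope ring_scope.
Set Implicit Arguments. Unset Strict Implicit. Unset Printing Implicit Defensive.

Lemma closed_setI_preimage {T S : topologicalType} (A : set T) (D : set S)
    (f : T -> S) :
  closed A -> {within A, continuous f} -> closed D -> closed (A `&` f @^-1` D).
Proof.
by move=> cA cf cD; rewrite closed_setSI //; exact: (continuous_closedP _).1 cf _ cD.
Qed.

Lemma closed_rV_coord (R : numFieldType) N (i : 'I_N) (D : set R) :
  closed D -> closed [set x : 'rV[R]_N | D (x ord0 i)].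
Proof. by apply: preimage_closed => x _; exact: coord_continuous. Qed.

Lemma continuous_rowsum (R : numFieldType) N :
  continuous (fun x : 'rV[R]_N => \sum_i x ord0 i).
Proof.
apply: continuous_big => [|i _]; [exact: add_continuous | exact: coord_continuous].
Qed.

Lemma closed_realization (R : realType) N (K : {set {set 'I_N}}) :
  closed (@realization R N K).
Proof.
have -> : realization K =
    \bigcap_i [set x : 'rV[R]_N | 0 <= x ord0 i] `&`
    (fun x : 'rV[R]_N => \sum_i x ord0 i) @^-1` [set 1] `&`
    \bigcup_(s in [set s | s \in K]) \bigcap_(i in [set i | i \notin s])
       [set x : 'rV[R]_N | x ord0 i = 0].
  apply/seteqP; split=> x /=.
    move=> [x0 [x1 [s sK xs]]]; split; first by split=> // i _; exact: x0.
    exists s => // i /= nis; exact: contraNeq (xs i) nis.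
  move=> [[x0 x1] [s sK xs]]; split=> [i|]; first exact: x0.
  split=> //; exists s => // i.
  by apply: contraNT => /xs /eqP.
apply: closedI; first apply: closedI.
- apply: closed_bigI => i _.
  by apply: (closed_rV_coord (D := [set r | 0 <= r])); exact: closed_ge.
- apply: preimage_closed; last exact: closed_eq.
  by move=> x _; exact: continuous_rowsum.
- apply: closed_bigcup => [|s _]; first exact: finite_finset.
  apply: closed_bigI => i _.
  by apply: (closed_rV_coord (D := [set r | r = 0])); exact: closed_eq.
Qed.

Lemma closed_Uset (R : realType) N k (K : {set {set 'I_N}})
    (g : 'rV[R]_N -> 'rV[R]_k) (alpha : R) :
  {within realization K, continuous g} -> closed (Uset K g alpha).
Proof.
move=> gc; have -> : Uset K g alpha =
    realization K `&` g @^-1` \bigcap_i [set y : 'rV[R]_k | y ord0 i <= - alpha].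
  by apply/seteqP; split=> x [Kx gx]; split=> // i; [move=> _|]; apply: gx.
apply: closed_setI_preimage gc _; first exact: closed_realization.
apply: closed_bigI => i _; apply: (closed_rV_coord (D := [set r | r <= - alpha])).
exact: closed_le.
Qed.

Lemma continuous_row {T S : topologicalType} n (F : 'I_n -> T -> S) :
  (forall i, continuous (F i)) -> continuous (fun x => \row_i F i x).
Proof.
move=> Fc x A [P nP sPA].
have : \forall y \near x, forall j, P ord0 j (F j y).
  apply: (@filter_forall _ _ (fun j y => P ord0 j (F j y))) => j.
  by have := nP ord0 j; rewrite mxE; exact: Fc.
by apply: filterS => y Py; apply: sPA => i j; rewrite (ord1 i) mxE.
Qed.

Lemma rV_continuous_bounded_extension {X : topologicalType} {R : realType} n
    (A : set X) (d : X -> 'rV[R]_n) (M : R) :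
  normal_space X -> closed A -> 0 < M -> {within A, continuous d} ->
  (forall x, A x -> forall i, `|d x ord0 i| <= M) ->
  exists e : X -> 'rV[R]_n,
    [/\ {in A, d =1 e}, continuous e & forall x i, `|e x ord0 i| <= M].
Proof.
move=> nX cA M0 dc db.
have coord_ext i : exists e_i : X -> R^o,
    [/\ {in A, (fun x => d x ord0 i) =1 e_i}, continuous e_i
       & forall x, `|e_i x| <= M].
  apply: continuous_bounded_extension => // [x|x Ax]; last exact: db.
  apply: (@continuous_comp (subspace A) _ _ d (fun v : 'rV[R]_n => v ord0 i)).
    exact: dc.
  exact: coord_continuous.
have [e ext] := choice coord_ext.
exists (fun x => \row_i e i x); split.
- by move=> x Ax; apply/rowP => i; rewrite mxE; case: (ext i) => + _ _; apply.
- by apply: continuous_row => i; case: (ext i).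
- by move=> x i; rewrite mxE; case: (ext i).
Qed.

Lemma sub_fun_perturbation (R : realType) N n (A B : set 'rV[R]_N) (alpha : R)
    (f h : 'rV[R]_N -> 'rV[R]_n) :
  A `<=` B -> fun_perturbation B alpha f h -> fun_perturbation A alpha f h.
Proof.
move=> AB [hc hb]; split; first exact: continuous_subspaceW hc.
by move=> x /AB; exact: hb.
Qed.

Lemma shift_system_perturbation (R : realType) N n k (K : {set {set 'I_N}})
    (f : 'rV[R]_N -> 'rV[R]_n) (g : 'rV[R]_N -> 'rV[R]_k)
    (e : 'rV[R]_N -> 'rV[R]_n) (alpha : R) :
  {within realization K, continuous f} -> {within realization K, continuous g} ->
  0 <= alpha -> continuous e -> (forall x i, `|e x ord0 i| <= alpha) ->
  system_perturbation K alpha f (fun x => f x + e x)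
    g (fun x => g x + const_mx alpha).
Proof.
move=> fc gc alpha0 ec eb; split; [|split; [|split]].
- move=> x; apply: (@continuousD _ _ (subspace _) f e); first exact: fc.
  exact: (continuous_subspaceT ec).
- move=> x; apply: (@continuousD _ _ (subspace _) g (cst (const_mx alpha))).
    exact: gc.
  exact: cvg_cst.
- by move=> x _ i; rewrite mxE addrAC subrr add0r.
- by move=> x _ i; rewrite !mxE addrAC subrr add0r ger0_norm.
Qed.

Section Lemma3p7.
Variables (R : realType) (N n k : nat) (K : {set {set 'I_N}}).
Variables (f : 'rV[R]_N -> 'rV[R]_n) (g : 'rV[R]_N -> 'rV[R]_k) (alpha : R).

Let U := Uset K g alpha.

Let UK : U `<=` realization K. Proof. by move=> x []. Qed.

Lemma root_of_satisfiable_perturbations :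
  {within realization K, continuous f} -> {within realization K, continuous g} ->
  0 < alpha ->
  (forall ft gt, system_perturbation K alpha f ft g gt -> satisfiable K ft gt) ->
  forall h, fun_perturbation U alpha f h -> exists2 x, U x & h x = 0.
Proof.
move=> fc gc alpha0 sat h [hc hb].
have hfc : {within U, continuous (fun x => h x - f x)}.
  move=> x; apply: (@continuousB _ _ (subspace _) h f); first exact: hc.
  exact: (continuous_subspaceW UK fc).
have hfb x : U x -> forall i, `|(h x - f x) ord0 i| <= alpha.
  by move=> Ux i; rewrite !mxE; exact: hb.
have [e [ehf ec eb]] := rV_continuous_bounded_extension pseudometric_normal
  (closed_Uset (alpha := alpha) gc) alpha0 hfc hfb.
have [x Kx [fex0 gx]] :=
  sat _ _ (shift_system_perturbation fc gc (ltW alpha0) ec eb).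
have Ux : U x by split=> // i; have := gx i; rewrite !mxE; lra.
exists x => //; rewrite -[h x](subrK (f x)) ehf ?inE // addrC.
exact: fex0.
Qed.

Lemma satisfiable_of_perturbation_roots :
  (forall h, fun_perturbation U alpha f h -> exists2 x, U x & h x = 0) ->
  forall ft gt, system_perturbation K alpha f ft g gt -> satisfiable K ft gt.
Proof.
move=> roots ft gt [fc [gc [fb gb]]].
have [x [Kx gx] ftx] :=
  roots ft (sub_fun_perturbation UK (conj fc fb : fun_perturbation _ _ _ _)).
exists x => //; split=> // i.
by have := gb x Kx i; have := gx i; rewrite ler_norml; lra.
Qed.

End Lemma3p7.

Theorem lemma3p7 (R : realType) (N n k : nat) (K : {set {set 'I_N}})
  (HK : is_simplicial_complex K)
  (f : 'rV[R]_N -> 'rV[R]_n) (g : 'rV[R]_N -> 'rV[R]_k)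
  (hf : {within realization K, continuous f})
  (hg : {within realization K, continuous g})
  (alpha : R) (halpha : 0 < alpha) :
  (forall (ft : 'rV[R]_N -> 'rV[R]_n) (gt : 'rV[R]_N -> 'rV[R]_k),
      system_perturbation K alpha f ft g gt -> satisfiable K ft gt)
  <->
  (forall h : 'rV[R]_N -> 'rV[R]_n,
      fun_perturbation (Uset K g alpha) alpha f h ->
      exists2 x, Uset K g alpha x & h x = 0).
Proof.
split; first exact: root_of_satisfiable_perturbations.
exact: satisfiable_of_perturbation_roots.
Qed.
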